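(* Let $F$ be a field of characteristic different from $2$, let $a_1,a_2\in F^\times$ be such that $E=F(\sqrt{a_1},\sqrt{a_2})$ is Galois over $F$ with $G=\mathrm{Gal}(E/F)\cong\mathbb Z/2\mathbb Z\times\mathbb Z/2\mathbb Z$, and let $\sigma_1,\sigma_2\in G$ be the generators with $\sigma_1(\sqrt{a_1})=\sqrt{a_1}$, $\sigma_1(\sqrt{a_2})=-\sqrt{a_2}$, $\sigma_2(\sqrt{a_2})=\sqrt{a_2}$, $\sigma_2(\sqrt{a_1})=-\sqrt{a_1}$. Let $E_1=F(\sqrt{a_1})$, $E_2=F(\sqrt{a_2})$, $E_3=F(\sqrt{a_1a_2})$. Then the following five subsets of $E^\times$ are equal: \begin{align*} K_1&=\ker(1-\sigma_1)(1-\sigma_2)=\{e\in E^\times: e\,\sigma_1\sigma_2(e)=\sigma_1(e)\,\sigma_2(e)\},\\ K_2&=\ker(1-\sigma_1)\cdot\ker(1-\sigma_2),\\ K_3&=\langle E_1^\times,E_2^\times\rangle,\\ K_4&=\{e\in E^\times: N_{E/E_3}(e)\in F^\times\},\\ K_5&=\{e\in E^\times: N_{E/E_3}(e)\in N_{E_1/F}(E_1^\times)\cdot N_{E_2/F}(E_2^\times)\}. \end{align*}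
   Context: $\ker(1-\sigma_i)=\{e\in E^\times: e/\sigma_i(e)=1\}$. For subsets $A,B$ of a multiplicative group, $A\cdot B=\{ab:a\in A,b\in B\}$. $\langle E_1^\times,E_2^\times\rangle$ is the smallest subgroup of $E^\times$ containing $E_1^\times$ and $E_2^\times$. $N_{E/E_3}(e)=e\,\sigma_1\sigma_2(e)$ (note $\mathrm{Gal}(E/E_3)=\{\mathrm{id},\sigma_1\sigma_2\}$), and for $x\in E_i^\times$, $N_{E_i/F}(x)=x\,\bar x$ where $\bar x$ is the conjugate of $x$ over $F$ (i.e. $N_{E_i/F}(f+g\sqrt{a_i})=f^2-a_ig^2$). *)

From HB Require Import structures.
From mathcomp Require Import all_boot all_order all_algebra all_fingroup all_field.
Set Implicit Arguments. Unset Strict Implicit. Unset Printing Implicit Defensive.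
Import GRing.Theory.
Local Open Scope ring_scope.

Definition units_of (F0 : fieldType) (L : fieldExtType F0) (U : {vspace L}) (x : L) : Prop :=
  x \in U /\ x != 0.

Definition is_mult_subgroup (F0 : fieldType) (L : fieldExtType F0) (S : L -> Prop) : Prop :=
  [/\ forall x, S x -> x != 0, S 1,
      forall x y, S x -> S y -> S (x * y) & forall x, S x -> S x^-1].

Definition gen_mult_subgroup (F0 : fieldType) (L : fieldExtType F0) (A B : L -> Prop)
  (x : L) : Prop :=
  forall S : L -> Prop, is_mult_subgroup S ->
    (forall y, A y -> S y) -> (forall y, B y -> S y) -> S x.

From HB Require Import structures.
From mathcomp Require Import all_boot all_order all_algebra all_fingroup all_field.
From mathcomp Require Import ring.
Set Implicit Arguments.
Unset Strict Implicit.
Unset Printing Implicit Defensive.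
Import GRing.Theory.
Local Open Scope ring_scope.

(* Everything reduces to square roots: an automorphism of E fixing a subfield
   K is determined on K(r), r^2 in K, by the image of r, which must be +r or -r.
   Hence s1, s2 are commuting involutions with fixed fields E1, E2 and F, and
   N_{E/E3}(e) = e s1s2(e), N_{E1/F}(x) = x s2(x), N_{E2/F}(y) = y s1(y).
   Both s1 and s2 send N_{E/E3}(e) to s1(e) s2(e), so the defining equation of
   K1 says exactly that this norm is fixed by G, i.e. lies in F: K1 = K4.
   For e in K1, z = e / s2(e) lies in E1 and z s2(z) = 1, so Hilbert 90 for
   E1/F gives w in E1 with z = w / s2(w); then e = w (e / w) with e / w fixed
   by s2, so K1 = K2.  K1 is a subgroup containing E1^x and E2^x, hence K1 = K3,
   and multiplicativity of the norms gives K2 <= K5 <= K4. *)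

Section AdjoinSqrt.
Variables (F : fieldType) (L : fieldExtType F).
Implicit Types (K : {subfield L}) (r y : L).

Lemma aend_fix1 (f : 'AEnd(L)) : {in 1%VS, f =1 id}.
Proof. by apply/kAHomP; apply: (k1AHom fullv f). Qed.

Lemma eq_oppr_eq0 {w : L} : (2%:R : L) != 0 -> w = - w -> w = 0.
Proof.
move=> h2 hw; apply/eqP; have : w * 2%:R == 0.
  by rewrite mulr_natr mulr2n {1}hw addNr.
by rewrite mulf_eq0 (negPf h2) orbF.
Qed.

Lemma sqrt_neq0 (r : L) (a : F) : a != 0 -> r ^+ 2 = a%:A -> r != 0.
Proof.
move=> a_neq0 ra; apply: contra_neq a_neq0 => r0.
have /eqP : a%:A = 0 :> L by rewrite -ra r0 expr0n.
by rewrite scaler_eq0 oner_eq0 orbF => /eqP.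
Qed.

Lemma adjoin_sqrt_decomp {K r y} : r ^+ 2 \in K -> y \in <<K; r>>%VS ->
  exists c0 c1, [/\ c0 \in K, c1 \in K & y = c0 + c1 * r].
Proof.
move=> Kr2 Ey.
have p_neq0 : 'X^2 - (r ^+ 2)%:P != 0 :> {poly L}.
  by rewrite -size_poly_eq0 size_XnsubC.
have deg_le2 : (adjoin_degree K r <= 2)%N.
  have min_dvd : minPoly K r %| 'X^2 - (r ^+ 2)%:P.
    apply: minPoly_dvdp; first by rewrite rpredB ?rpredX ?polyOverX ?polyOverC.
    by rewrite /root !hornerE subrr.
  have := dvdp_leq p_neq0 min_dvd; rewrite size_minPoly size_XnsubC //.
set p := Fadjoin_poly K r y.
have Kp : p \is a polyOver K := Fadjoin_polyOver K r y.
have size_p : (size p <= 2)%N := leq_trans (size_Fadjoin_poly K r y) deg_le2.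
exists p`_0, p`_1; split; try exact: (polyOverP Kp).
rewrite -(Fadjoin_poly_eq Ey) -/p (horner_coef_wide _ size_p).
by rewrite !big_ord_recr big_ord0 /= add0r expr0 mulr1 expr1.
Qed.

Lemma eq_in_adjoin_sqrt K r (f g : {rmorphism L -> L}) :
  r ^+ 2 \in K -> {in K, f =1 g} -> f r = g r -> {in <<K; r>>%VS, f =1 g}.
Proof.
move=> Kr2 fgK fgr y /(adjoin_sqrt_decomp Kr2)[c0 [c1 [Kc0 Kc1 ->]]].
by rewrite !rmorphD !rmorphM fgr (fgK c0) // (fgK c1).
Qed.

Lemma adjoin_sqrt_fixed K r (f : {rmorphism L -> L}) y :
  (2%:R : L) != 0 -> r ^+ 2 \in K -> {in K, f =1 id} -> f r = - r ->
  y \in <<K; r>>%VS -> f y = y -> y \in K.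
Proof.
move=> h2 Kr2 fK fr /(adjoin_sqrt_decomp Kr2)[c0 [c1 [Kc0 Kc1 ->]]].
rewrite rmorphD rmorphM fr (fK c0) // (fK c1) // mulrN.
by move=> /addrI /esym /(eq_oppr_eq0 h2) ->; rewrite addr0.
Qed.

Lemma adjoin_sqrt_stable K r (f : 'AEnd(L)) :
  r ^+ 2 \in K -> {in K, f =1 id} -> f r \in <<K; r>>%VS ->
  (f @: <<K; r>> <= <<K; r>>)%VS.
Proof.
move=> Kr2 fK Efr; apply/subvP => _ /memv_imgP[y Ey ->].
have [c0 [c1 [Kc0 Kc1 ->]]] := adjoin_sqrt_decomp Kr2 Ey.
have -> : f (c0 + c1 * r) = c0 + c1 * f r.
  by rewrite rmorphD rmorphM; congr (_ + _ * _); exact: fK.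
rewrite rpredD ?rpredM //; exact: (subvP (subv_adjoin K r)).
Qed.

Lemma hilbert90_sqrt (K : {subfield L}) (f : {rmorphism L -> L}) (z r : L) :
  z \in K -> r \in K -> r != 0 -> f r = - r -> f z * z = 1 ->
  exists2 w, w \in K & w != 0 /\ f w * z = w.
Proof.
move=> Kz Kr r_neq0 fr fzz; have [->|z_neqN1] := eqVneq z (-1).
  by exists r => //; rewrite fr mulrNN mulr1.
exists (1 + z); first by rewrite rpredD ?mem1v.
by rewrite addrC addr_eq0 z_neqN1 rmorphD rmorph1 mulrDl fzz mul1r addrC.
Qed.

End AdjoinSqrt.

Section QuadraticGalois.
Variables (F : fieldType) (L : splittingFieldType F).
Implicit Types (K E : {subfield L}) (r : L).

Lemma galNorm_gal_pair K E (g : gal_of E) x :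
  ('Gal(E / K) = [set 1; g])%g -> g != 1%g -> galNorm K E x = x * g x.
Proof.
move=> GalE g_neq1; rewrite /galNorm GalE big_setU1 ?big_set1 ?gal_id //=.
by rewrite in_set1 eq_sym.
Qed.

Lemma gal_adjoin_sqrt K r (g : gal_of <<K; r>>) :
  (2%:R : L) != 0 -> r != 0 -> r ^+ 2 \in K ->
  g \in 'Gal(<<K; r>> / K)%g -> g r = - r ->
  ('Gal(<<K; r>> / K) = [set 1; g])%g /\ g != 1%g.
Proof.
move=> h2 r_neq0 Kr2 gG gr; set E := <<K; r>>%AS.
have KE : (K <= E)%VS := subv_adjoin K r.
split; last first.
  apply: contraNneq r_neq0 => g1; apply/eqP; apply: (eq_oppr_eq0 h2).
  by rewrite -gr g1 gal_id.
apply/eqP; rewrite eqEsubset subUset !sub1set group1 gG !andbT.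
apply/subsetP => h hG; rewrite !inE.
have hr2 : h r ^+ 2 = r ^+ 2 by rewrite -rmorphXn; exact: fixed_gal KE hG Kr2.
have eq_on_r (k : gal_of E) : k \in 'Gal(E / K)%g -> h r = k r -> h == k.
  move=> kG hkr; apply/gal_eqP; apply: eq_in_adjoin_sqrt hkr => // y Ky.
  exact: etrans (fixed_gal KE hG Ky) (esym (fixed_gal KE kG Ky)).
move/eqP: hr2; rewrite eqf_sqr => /orP[/eqP hr | /eqP hr].
  by rewrite (eq_on_r 1%g) ?group1 ?gal_id.
by rewrite (eq_on_r g) ?gr ?orbT.
Qed.

Lemma galNorm_adjoin_sqrt K r (f : 'AEnd(L)) :
  (2%:R : L) != 0 -> r != 0 -> r ^+ 2 \in K -> {in K, f =1 id} -> f r = - r ->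
  {in <<K; r>>%VS, forall x, galNorm K <<K; r>> x = x * f x}.
Proof.
move=> h2 r_neq0 Kr2 fK fr x Ex; set E := <<K; r>>%AS.
have fE : (f @: E <= E)%VS.
  by apply: adjoin_sqrt_stable; rewrite // fr rpredN memv_adjoin.
have gE : {in E, gal E f =1 f} := galK fE.
have gG : gal E f \in 'Gal(E / K)%g.
  rewrite gal_kHom ?subv_adjoin //; apply/kAHomP => y Ky.
  by rewrite gE ?fK ?(subvP (subv_adjoin K r)).
have gr : gal E f r = - r by rewrite gE ?memv_adjoin.
have [GalE g_neq1] := gal_adjoin_sqrt h2 r_neq0 Kr2 gG gr.
by rewrite (galNorm_gal_pair _ GalE g_neq1) gE.
Qed.

End QuadraticGalois.

Section Biquadratic.
Variables (F : fieldType) (L : splittingFieldType F).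
Variables (a1 a2 : F) (r1 r2 : L) (s1 s2 : gal_of (fullv : {vspace L})).
Hypotheses (h2F : 2%:R != 0 :> F) (a1_neq0 : a1 != 0) (a2_neq0 : a2 != 0).
Hypotheses (r1_sq : r1 ^+ 2 = a1%:A) (r2_sq : r2 ^+ 2 = a2%:A).
Hypothesis adjoin_r1r2 : <<<<1; r1>>; r2>>%VS = fullv.
Hypotheses (s1r1 : s1 r1 = r1) (s1r2 : s1 r2 = - r2).
Hypotheses (s2r2 : s2 r2 = r2) (s2r1 : s2 r1 = - r1).

Let h2 : (2%:R : L) != 0.
Proof. by rewrite -(rmorph_nat (in_alg L)) fmorph_eq0. Qed.

Let r1_neq0 := sqrt_neq0 a1_neq0 r1_sq.
Let r2_neq0 := sqrt_neq0 a2_neq0 r2_sq.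

Let sqr_mem (K : {subfield L}) (r : L) (a : F) : r ^+ 2 = a%:A -> r ^+ 2 \in K.
Proof. by move->; rewrite rpredZ ?mem1v. Qed.

Lemma full_subfield (E : {subfield L}) :
  r1 \in E -> r2 \in E -> (E : {vspace L}) = fullv.
Proof.
move=> Er1 Er2; apply/eqP; rewrite eqEsubv subvf -adjoin_r1r2 /=.
by apply/FadjoinP; split=> //; apply/FadjoinP; rewrite sub1v.
Qed.

Let sqr_r2_E1 : r2 ^+ 2 \in <<1; r1>>%AS. Proof. exact: sqr_mem r2_sq. Qed.
Let sqr_r1_E2 : r1 ^+ 2 \in <<1; r2>>%AS. Proof. exact: sqr_mem r1_sq. Qed.

Lemma adjoin_r2r1 : <<<<1; r2>>; r1>>%VS = fullv.
Proof.
apply: full_subfield; first exact: memv_adjoin.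
by apply: (subvP (subv_adjoin _ _)); rewrite memv_adjoin.
Qed.

Lemma adjoin_r1r2_r1 : <<<<1; r1 * r2>>; r1>>%VS = fullv.
Proof.
apply: full_subfield; first exact: memv_adjoin.
have r2E : a1^-1 *: (r1 * r2 * r1) = r2.
  by rewrite mulrAC -expr2 r1_sq -scalerAl mul1r scalerA mulVf ?scale1r.
suff : a1^-1 *: (r1 * r2 * r1) \in <<<<1; r1 * r2>>; r1>>%VS by rewrite r2E.
rewrite rpredZ // rpredM ?memv_adjoin //.
by apply: (subvP (subv_adjoin _ _)); rewrite memv_adjoin.
Qed.

Lemma gal_eq_biquadratic (g h : gal_of fullv) : g r1 = h r1 -> g r2 = h r2 -> g = h.
Proof.
move=> ghr1 ghr2; apply/eqP/gal_eqP => y _.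
have : y \in <<<<1; r1>>; r2>>%VS by rewrite adjoin_r1r2 memvf.
apply: (@eq_in_adjoin_sqrt _ _ _ _ g h) => //.
apply: (@eq_in_adjoin_sqrt _ _ 1%AS _ g h) => //; first exact: sqr_mem r1_sq.
by move=> k k1; rewrite /= !aend_fix1.
Qed.

Let galM_full (g h : gal_of fullv) (y : L) : (g * h)%g y = h (g y).
Proof. exact: galM (memvf y). Qed.

Lemma s1K : cancel s1 s1.
Proof.
have s1s1 : (s1 * s1)%g = 1%g.
  apply: gal_eq_biquadratic; rewrite gal_id !galM_full ?s1r1 //.
  by rewrite [s1 r2]s1r2 rmorphN /= s1r2 opprK.
by move=> y; rewrite -[s1 (s1 y)]galM_full s1s1 gal_id.
Qed.

Lemma s2K : cancel s2 s2.
Proof.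
have s2s2 : (s2 * s2)%g = 1%g.
  apply: gal_eq_biquadratic; rewrite gal_id !galM_full ?s2r2 //.
  by rewrite [s2 r1]s2r1 rmorphN /= s2r1 opprK.
by move=> y; rewrite -[s2 (s2 y)]galM_full s2s2 gal_id.
Qed.

Lemma s1s2C (y : L) : s1 (s2 y) = s2 (s1 y).
Proof.
have s1s2 : (s2 * s1)%g = (s1 * s2)%g.
  apply: gal_eq_biquadratic; rewrite !galM_full.
    by rewrite [s2 r1]s2r1 s1r1 rmorphN /= s1r1.
  by rewrite [s1 r2]s1r2 s2r2 rmorphN /= s2r2.
by rewrite -[s1 (s2 y)]galM_full s1s2 galM_full.
Qed.

Lemma s1_fixE1 : {in <<1; r1>>%VS, s1 =1 id}.
Proof.
apply: (@eq_in_adjoin_sqrt _ _ 1%AS _ s1 idfun) => //; first exact: sqr_mem r1_sq.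
exact: aend_fix1.
Qed.

Lemma s2_fixE2 : {in <<1; r2>>%VS, s2 =1 id}.
Proof.
apply: (@eq_in_adjoin_sqrt _ _ 1%AS _ s2 idfun) => //; first exact: sqr_mem r2_sq.
exact: aend_fix1.
Qed.

Lemma s1_fixedP (y : L) : s1 y = y <-> y \in <<1; r1>>%VS.
Proof.
split=> [s1y|]; last exact: s1_fixE1.
apply: (adjoin_sqrt_fixed (f := s1) h2 sqr_r2_E1) => //; first exact: s1_fixE1.
by rewrite adjoin_r1r2 memvf.
Qed.

Lemma s2_fixedP (y : L) : s2 y = y <-> y \in <<1; r2>>%VS.
Proof.
split=> [s2y|]; last exact: s2_fixE2.
apply: (adjoin_sqrt_fixed (f := s2) h2 sqr_r1_E2) => //; first exact: s2_fixE2.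
by rewrite adjoin_r2r1 memvf.
Qed.

Lemma s12_fixed (y : L) : s1 y = y -> s2 y = y -> y \in 1%VS.
Proof.
move=> /s1_fixedP E1y s2y.
apply: (adjoin_sqrt_fixed (K := 1%AS) (f := s2) h2 (sqr_mem _ r1_sq)) => //.
exact: aend_fix1.
Qed.

Lemma galNorm_E1 (x : L) :
  x \in <<1; r1>>%VS -> galNorm 1 <<1; r1>> x = x * s2 x.
Proof.
exact: (@galNorm_adjoin_sqrt _ _ 1%AS r1 s2 h2 r1_neq0 (sqr_mem _ r1_sq)
         (aend_fix1 _) s2r1).
Qed.

Lemma galNorm_E2 (y : L) :
  y \in <<1; r2>>%VS -> galNorm 1 <<1; r2>> y = y * s1 y.
Proof.
exact: (@galNorm_adjoin_sqrt _ _ 1%AS r2 s1 h2 r2_neq0 (sqr_mem _ r2_sq)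
         (aend_fix1 _) s1r2).
Qed.

Lemma galNorm_E3 (e : L) : galNorm <<1; r1 * r2>> fullv e = e * s1 (s2 e).
Proof.
pose t : gal_of fullv := (s2 * s1)%g.
have tE (y : L) : t y = s1 (s2 y) by exact: galM_full.
have r12_sq : (r1 * r2) ^+ 2 = (a1 * a2)%:A.
  by rewrite exprMn r1_sq r2_sq -scalerAl mul1r scalerA.
have t_fixE3 : {in <<1; r1 * r2>>%VS, t =1 id}.
  apply: (@eq_in_adjoin_sqrt _ _ 1%AS _ t idfun) => //; first exact: sqr_mem r12_sq.
    exact: aend_fix1.
  by rewrite /= tE rmorphM /= s2r1 s2r2 rmorphM /= rmorphN /= s1r1 s1r2 mulrNN.
have tr1 : t r1 = - r1 by rewrite tE s2r1 rmorphN /= s1r1.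
have := galNorm_adjoin_sqrt (K := <<1; r1 * r2>>%AS) h2 r1_neq0
  (sqr_mem _ r1_sq) t_fixE3 tr1.
by rewrite adjoin_r1r2_r1 => ->; rewrite ?memvf // -tE.
Qed.

Definition cross_kernel (e : L) := e != 0 /\ e * s1 (s2 e) = s1 e * s2 e.

Lemma cross_kernel_fixed_prod (e : L) : cross_kernel e <-> exists x y : L,
  [/\ x != 0 /\ s1 x = x, y != 0 /\ s2 y = y & e = x * y].
Proof.
split=> [[e_neq0 He] | [x [y [[x_neq0 s1x] [y_neq0 s2y] ->]]]]; last first.
  split; first by rewrite mulf_neq0.
  by rewrite !rmorphM /= s1s2C s1x s2y; ring.
have s2e_neq0 : s2 e != 0 by rewrite fmorph_eq0.
pose z := e / s2 e.
have E1z : z \in <<1; r1>>%VS.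
  apply/s1_fixedP; rewrite /z rmorphM fmorphV /=.
  by apply/eqP; rewrite eqr_div ?fmorph_eq0 // He.
have norm_z : s2 z * z = 1.
  by rewrite /z rmorphM fmorphV /= s2K; field; rewrite s2e_neq0 e_neq0.
have [w E1w [w_neq0 s2wz]] :=
  hilbert90_sqrt E1z (memv_adjoin _ _) r1_neq0 s2r1 norm_z.
have s2w_neq0 : s2 w != 0 by rewrite fmorph_eq0.
exists w, (e / w); split=> //; last by field.
  by split=> //; apply/s1_fixedP.
split; first by rewrite mulf_neq0 ?invr_neq0.
rewrite rmorphM fmorphV /= -{2}s2wz /z; field.
by rewrite s2e_neq0 e_neq0 s2w_neq0.
Qed.

Lemma cross_kernel_subgroup : is_mult_subgroup cross_kernel.
Proof.
split=> [x [] // | | x y [x_neq0 Hx] [y_neq0 Hy] | x [x_neq0 Hx]].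
- by split; rewrite ?oner_neq0 // !rmorph1 mulr1.
- split; first by rewrite mulf_neq0.
  by rewrite !rmorphM /= mulrACA Hx Hy mulrACA.
- split; first by rewrite invr_neq0.
  by rewrite !fmorphV /= -!invfM Hx.
Qed.

Lemma cross_kernel_gen (e : L) : cross_kernel e <->
  gen_mult_subgroup (units_of <<1; r1>>%VS) (units_of <<1; r2>>%VS) e.
Proof.
split=> [/cross_kernel_fixed_prod[x [y [[x_neq0 s1x] [y_neq0 s2y] ->]]] | ].
  move=> S [_ _ SM _] SE1 SE2.
  apply: SM; [apply: SE1 | apply: SE2]; split=> //.
    exact/s1_fixedP.
  exact/s2_fixedP.
apply; first exact: cross_kernel_subgroup.
- move=> x [/s1_fixedP s1x x_neq0]; split=> //.
  by rewrite s1s2C s1x.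
- move=> y [/s2_fixedP s2y y_neq0]; split=> //.
  by rewrite s2y mulrC.
Qed.

Lemma s1s2_galNorm_E3 (e : L) :
  s1 (galNorm <<1; r1 * r2>> fullv e) = s1 e * s2 e /\
  s2 (galNorm <<1; r1 * r2>> fullv e) = s1 e * s2 e.
Proof. by rewrite galNorm_E3 !rmorphM /= s1K -s1s2C s2K mulrC. Qed.

Lemma cross_kernel_norm (e : L) : cross_kernel e <->
  e != 0 /\ units_of 1%VS (galNorm <<1; r1 * r2>> fullv e).
Proof.
have [s1N s2N] := s1s2_galNorm_E3 e.
split=> [[e_neq0 He] | [e_neq0 [N_in1 _]]].
  split=> //; split; last by rewrite galNorm_E3 mulf_neq0 ?fmorph_eq0.
  by apply: s12_fixed; rewrite ?s1N ?s2N galNorm_E3 He.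
by split=> //; rewrite -galNorm_E3 -s1N aend_fix1.
Qed.

Lemma cross_kernel_norm_prod (e : L) : cross_kernel e <->
  e != 0 /\ exists x y : L,
    [/\ units_of <<1; r1>>%VS x, units_of <<1; r2>>%VS y &
        galNorm <<1; r1 * r2>> fullv e =
          galNorm 1 <<1; r1>> x * galNorm 1 <<1; r2>> y].
Proof.
split=> [Ke | [e_neq0 [x [y [[E1x x_neq0] [E2y y_neq0] Ne]]]]].
  have [x [y [[x_neq0 s1x] [y_neq0 s2y] ->]]] := (@cross_kernel_fixed_prod e).1 Ke.
  have E1x := (@s1_fixedP x).1 s1x; have E2y := (@s2_fixedP y).1 s2y.
  split; first by rewrite mulf_neq0.
  exists x, y; split; [exact: conj E1x x_neq0 | exact: conj E2y y_neq0 |].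
  by rewrite galNorm_E3 galNorm_E1 // galNorm_E2 // !rmorphM /= s1s2C s1x s2y; ring.
have s1x := (@s1_fixedP x).2 E1x; have s2y := (@s2_fixedP y).2 E2y.
apply/cross_kernel_norm; split=> //; rewrite Ne galNorm_E1 // galNorm_E2 //.
split; last by rewrite !mulf_neq0 ?fmorph_eq0.
apply: s12_fixed; rewrite !rmorphM /=.
  by rewrite s1s2C s1x s1K; ring.
by rewrite -s1s2C s2y s2K; ring.
Qed.

End Biquadratic.

Theorem theorem4 (F : fieldType) (L : splittingFieldType F) (a1 a2 : F)
  (r1 r2 : L) (s1 s2 : gal_of fullv) :
  (2%:R != 0 :> F) -> a1 != 0 -> a2 != 0 ->
  r1 ^+ 2 = a1%:A -> r2 ^+ 2 = a2%:A ->
  <<<<1; r1>>; r2>>%VS = fullv ->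
  galois 1 (fullv : {vspace L}) ->
  ('Gal((fullv : {vspace L}) / 1) \isog [set: 'Z_2 * 'Z_2])%g ->
  s1 \in 'Gal(fullv / 1)%g -> s2 \in 'Gal(fullv / 1)%g ->
  s1 r1 = r1 -> s1 r2 = - r2 -> s2 r2 = r2 -> s2 r1 = - r1 ->
  let E1 := <<1; r1>>%VS in
  let E2 := <<1; r2>>%VS in
  let E3 := <<1; r1 * r2>>%VS in
  let K1 := fun e : L => e != 0 /\ e * s1 (s2 e) = s1 e * s2 e in
  let K2 := fun e : L => exists x y : L,
      [/\ x != 0 /\ s1 x = x, y != 0 /\ s2 y = y & e = x * y] in
  let K3 := gen_mult_subgroup (units_of E1) (units_of E2) in
  let K4 := fun e : L => e != 0 /\ units_of (1%VS : {vspace L}) (galNorm E3 fullv e) in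
  let K5 := fun e : L => e != 0 /\ exists x y : L,
      [/\ units_of E1 x, units_of E2 y &
          galNorm E3 fullv e = galNorm 1 E1 x * galNorm 1 E2 y] in
  forall e : L,
    (K1 e <-> K2 e) /\ (K1 e <-> K3 e) /\ (K1 e <-> K4 e) /\ (K1 e <-> K5 e).
Proof.
move=> h2 a1_neq0 a2_neq0 r1_sq r2_sq adjoin_r1r2 _ _ _ _ s1r1 s1r2 s2r2 s2r1.
move=> E1 E2 E3 K1 K2 K3 K4 K5 e.
split; [|split; [|split]].
- exact: (cross_kernel_fixed_prod h2 a1_neq0 r1_sq r2_sq adjoin_r1r2
            s1r1 s1r2 s2r2 s2r1 e).
- exact: (cross_kernel_gen h2 a1_neq0 r1_sq r2_sq adjoin_r1r2
            s1r1 s1r2 s2r2 s2r1 e).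
- exact: (cross_kernel_norm h2 a1_neq0 r1_sq r2_sq adjoin_r1r2
            s1r1 s1r2 s2r2 s2r1 e).
- exact: (cross_kernel_norm_prod h2 a1_neq0 a2_neq0 r1_sq r2_sq adjoin_r1r2
            s1r1 s1r2 s2r2 s2r1 e).
Qed.
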